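(* In type $C_\infty$, let $\lambda$ be a partition of $n$ with charge $\kappa\in\mathbb Z$ and let $A$ be a Garnir node of $[\lambda]$. Then there is no row-strict $\lambda$-tableau $\mathsf t$ with $\mathsf t\rhd\mathsf g^A$ and $\mathrm{res}\,\mathsf t=\mathrm{res}\,\mathsf g^A$.
   Context: Residues in type $C_\infty$: node $(r,c)$ of $\lambda$ has residue $|\kappa+c-r|\in\mathbb Z_{\ge0}$; for a tableau $\mathsf t$ (bijection $[\lambda]\to\{1,\dots,n\}$), $\mathrm{res}\,\mathsf t=(\mathrm{res}\,\mathsf t^{-1}(1),\dots,\mathrm{res}\,\mathsf t^{-1}(n))$. Row-strict means entries increase along rows. $\mathsf t^\lambda$ is the initial tableau (entries in order along successive rows), $w^{\mathsf t}\in\mathfrak S_n$ satisfies $w^{\mathsf t}\mathsf t^\lambda=\mathsf t$ ($\mathfrak S_n$ acting on entries). Dominance order on tableaux: $\mathsf t\trianglerighteq\mathsf s$ iff $w^{\mathsf t}\preccurlyeq w^{\mathsf s}$ in Bruhat order; $\mathsf t\rhd\mathsf s$ means $\mathsf t\trianglerighteq\mathsf s$ and $\mathsf t\ne\mathsf s$. A Garnir node is $A=(r,c)$ with $(r+1,c)\in[\lambda]$; the Garnir tableau $\mathsf g^A$ agrees with $\mathsf t^\lambda$ outside the belt $\{(r,a):a\ge c\}\cup\{(r+1,a):a\le c\}$ and fills the belt with $\mathsf t^\lambda(r,c),\dots,\mathsf t^\lambda(r+1,c)$, first along row $r+1$ left to right, then along row $r$ left to right. *)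

From HB Require Import structures.
From mathcomp Require Import all_boot all_order all_algebra.
Set Implicit Arguments. Unset Strict Implicit. Unset Printing Implicit Defensive.
Import Order.TTheory GRing.Theory Num.Theory.

Definition is_partition (lam : seq nat) : bool :=
  sorted geq lam && all (fun p => 0 < p) lam.

(* Nodes are 0-indexed pairs (row, column). *)
Definition in_diagram (lam : seq nat) (r c : nat) : bool :=
  (r < size lam) && (c < nth 0 lam r).

Definition nodes (lam : seq nat) : seq (nat * nat) :=
  flatten [seq [seq (r, c) | c <- iota 0 (nth 0 lam r)] | r <- iota 0 (size lam)].

Definition node_res (kappa : int) (r c : nat) : nat :=
  `|(kappa + (c%:Z) - (r%:Z))%R|%N.

(* A lam-tableau with entries {0,...,n-1}: a bijection [lam] -> {0,..,n-1}
   (given as a function on N x N, only its values on [lam] matter). *)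
Definition is_tableau (lam : seq nat) (n : nat) (t : nat -> nat -> nat) : Prop :=
  [/\ (forall r c, in_diagram lam r c -> t r c < n),
      (forall r c r' c', in_diagram lam r c -> in_diagram lam r' c' ->
          t r c = t r' c' -> (r, c) = (r', c')) &
      (forall k, k < n -> exists r c, in_diagram lam r c /\ t r c = k)].

Definition tab_eq (lam : seq nat) (t s : nat -> nat -> nat) : Prop :=
  forall r c, in_diagram lam r c -> t r c = s r c.

Definition row_strict (lam : seq nat) (t : nat -> nat -> nat) : Prop :=
  forall r c, in_diagram lam r c.+1 -> t r c < t r c.+1.

(* Initial tableau t^lam: entries 0,1,... along successive rows. *)
Definition tlam (lam : seq nat) (r c : nat) : nat := flatten_index lam r c.

Definition node_of (lam : seq nat) (t : nat -> nat -> nat) (k : nat) : nat * nat :=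
  nth (0, 0) (nodes lam) (find (fun x => t x.1 x.2 == k) (nodes lam)).

Definition res_seq (lam : seq nat) (n : nat) (kappa : int) (t : nat -> nat -> nat)
  : seq nat :=
  [seq node_res kappa (node_of lam t k).1 (node_of lam t k).2 | k <- iota 0 n].

(* w^t in one-line notation: w^t(m) = t(node of t^lam containing m),
   so that w^t t^lam = t. *)
Definition wperm (lam : seq nat) (n : nat) (t : nat -> nat -> nat) : seq nat :=
  [seq t (reshape_index lam m) (reshape_offset lam m) | m <- iota 0 n].

(* Coxeter length of a permutation in one-line notation = number of inversions. *)
Definition inversions (s : seq nat) : nat :=
  \sum_(i < size s) \sum_(j < size s) ((i < j) && (nth 0 s j < nth 0 s i)).

(* Right multiplication by the transposition (i j): swap positions i and j. *)
Definition swap_pos (s : seq nat) (i j : nat) : seq nat :=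
  set_nth 0 (set_nth 0 s i (nth 0 s j)) j (nth 0 s i).

Inductive bruhat_le : seq nat -> seq nat -> Prop :=
  | bruhat_refl u : bruhat_le u u
  | bruhat_step u v i j : i < j < size u ->
      inversions u < inversions (swap_pos u i j) ->
      bruhat_le (swap_pos u i j) v -> bruhat_le u v.

Definition tab_dom (lam : seq nat) (n : nat) (t s : nat -> nat -> nat) : Prop :=
  bruhat_le (wperm lam n t) (wperm lam n s).

Definition tab_sdom (lam : seq nat) (n : nat) (t s : nat -> nat -> nat) : Prop :=
  tab_dom lam n t s /\ ~ tab_eq lam t s.

(* Garnir tableau g^A for A = (r,c) (0-indexed), (r+1,c) in [lam].
   Belt = {(r,a) : a >= c} u {(r+1,a) : a <= c}, filled with
   t^lam(r,c), ..., t^lam(r+1,c), first along row r+1, then along row r. *)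
Definition garnir (lam : seq nat) (r c : nat) (i j : nat) : nat :=
  if (i == r.+1) && (j <= c) then tlam lam r c + j
  else if (i == r) && (c <= j) then tlam lam r c + c.+1 + (j - c)
  else tlam lam i j.

From HB Require Import structures.
From mathcomp Require Import all_boot all_order all_algebra zify.
From mathcomp Require Import fingroup perm.
Set Implicit Arguments. Unset Strict Implicit. Unset Printing Implicit Defensive.

(* If [v] maps every position [q <= p] to a value [<= p], so does every [u] below
   [v] in the Bruhat order, and dually for positions [q >= p].  The permutation of
   the Garnir tableau fixes every position outside the belt interval [[a, a + L]]
   ([a] the entry of [A] in [t^lam], [L] the length of row [r]) and permutes that
   interval, so a tableau [t] dominating [g^A] agrees with [t^lam] off the belt and
   fills the belt with the entries [a, ..., a + L].  In [g^A] the entry [a + x] has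
   residue [|e + x|] with [e = kappa - r - 1]; as [x |-> |e + x|] is at most
   two-to-one and never equal at consecutive arguments, a row-strict filling of
   the belt with the same residues must be the one of [g^A]. *)

Section SwapPos.
Variables (s : seq nat) (i j : nat).
Hypotheses (Hi : i < size s) (Hj : j < size s).

Lemma size_swap_pos : size (swap_pos s i j) = size s.
Proof. by rewrite /swap_pos !size_set_nth; lia. Qed.

Lemma nth_swap_pos k : nth 0 (swap_pos s i j) k =
  if k == j then nth 0 s i else if k == i then nth 0 s j else nth 0 s k.
Proof. by rewrite /swap_pos nth_set_nth /= nth_set_nth. Qed.

End SwapPos.

Lemma leq_nat_of_bool (b1 b2 : bool) : (b1 -> b2) -> b1 <= b2.
Proof. by case: b1 b2 => [] [] // ->. Qed.

Lemma inversions_pairE (s : seq nat) :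
  inversions s = \sum_(x : 'I_(size s) * 'I_(size s))
     ((x.1 < x.2) && (nth 0 s x.2 < nth 0 s x.1)).
Proof. by rewrite /inversions pair_bigA. Qed.

(* The transposition (i j) acts on the pairs whose relative order it preserves;
   pairing those and fixing the others matches each inversion of [swap_pos s i j]
   with an inversion of [s]. *)
Lemma inversions_swap_pos_leq (s : seq nat) i j : i < j < size s ->
  nth 0 s j <= nth 0 s i -> inversions (swap_pos s i j) <= inversions s.
Proof.
move=> /andP [ltij Hj] Hle; have Hi : i < size s by lia.
rewrite inversions_pairE [in X in _ <= X]inversions_pairE size_swap_pos //.
set N := size s in Hi Hj *.
pose sg := tperm (Ordinal Hi : 'I_N) (Ordinal Hj).
have sgE (x : 'I_N) :
    val (sg x) = if x == i :> nat then j else if x == j :> nat then i else x.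
  rewrite /sg; case: tpermP => [->|->|ni nj]; first by rewrite eqxx.
    by case: eqP => //= _; rewrite eqxx.
  case: eqP => [eqi|_]; first by case: ni; apply: val_inj.
  by case: eqP => [eqj|_] //; case: nj; apply: val_inj.
pose phi (x : 'I_N * 'I_N) :=
  if (x.1 < x.2) == (sg x.1 < sg x.2) then (sg x.1, sg x.2) else x.
have phiK : involutive phi.
  move=> [x1 x2]; rewrite /phi /=.
  case E: ((x1 < x2) == _) => /=; last by rewrite E.
  by rewrite !tpermK eq_sym E.
rewrite (reindex_inj (inv_inj phiK)) /=.
apply: leq_sum => [[x1 x2]] _; rewrite /phi /=.
have := ltn_ord x1; have := ltn_ord x2.
case: ifP => /= E; rewrite ?sgE !nth_swap_pos // => Hx2 Hx1;
  apply: leq_nat_of_bool => /andP [H1 H2]; move: E H1 H2; rewrite !sgE;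
  move: (nat_of_ord x1) (nat_of_ord x2) Hx1 Hx2 => p q Hp Hq;
  by do ! case: ifP => /eqP ?; subst; lia.
Qed.

Lemma swap_pos_inversions_ltn (u : seq nat) i j : i < j < size u ->
  inversions u < inversions (swap_pos u i j) -> nth 0 u i < nth 0 u j.
Proof.
move=> Hij; apply: contraTT; rewrite -!leqNgt.
exact: inversions_swap_pos_leq.
Qed.

Definition prefix_bounded (s : seq nat) p :=
  forall q, q <= p -> q < size s -> nth 0 s q <= p.

Definition suffix_bounded (s : seq nat) p :=
  forall q, p <= q -> q < size s -> p <= nth 0 s q.

Lemma bruhat_le_prefix_bounded u v p :
  bruhat_le u v -> prefix_bounded v p -> prefix_bounded u p.
Proof.
elim=> {u v} [//|u v i j ltij Hinv _ IH /IH].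
have Hlt := swap_pos_inversions_ltn ltij Hinv.
case/andP: ltij => ltij Hj; have Hi : i < size u by lia.
rewrite /prefix_bounded size_swap_pos // => Hp q Hq Hqs.
have [eqi|nqi] := eqVneq q i; first subst q.
  have [Hjp|Hpj] := leqP j p.
    by have := Hp j Hjp Hj; rewrite nth_swap_pos // eqxx.
  by have := Hp i Hq Hi; rewrite nth_swap_pos // (ltn_eqF ltij) eqxx; lia.
have [eqj|nqj] := eqVneq q j; first subst q.
  have := Hp i (leq_trans (ltnW ltij) Hq) Hi.
  by rewrite nth_swap_pos // (ltn_eqF ltij) eqxx.
by have := Hp q Hq Hqs; rewrite nth_swap_pos // (negbTE nqi) (negbTE nqj).
Qed.

Lemma bruhat_le_suffix_bounded u v p :
  bruhat_le u v -> suffix_bounded v p -> suffix_bounded u p.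
Proof.
elim=> {u v} [//|u v i j ltij Hinv _ IH /IH].
have Hlt := swap_pos_inversions_ltn ltij Hinv.
case/andP: ltij => ltij Hj; have Hi : i < size u by lia.
rewrite /suffix_bounded size_swap_pos // => Hp q Hq Hqs.
have [eqi|nqi] := eqVneq q i; first subst q.
  have := Hp j (leq_trans Hq (ltnW ltij)) Hj.
  by rewrite nth_swap_pos // eqxx.
have [eqj|nqj] := eqVneq q j; first subst q.
  have [Hpi|Hip] := leqP p i.
    by have := Hp i Hpi Hi; rewrite nth_swap_pos // (ltn_eqF ltij) eqxx.
  by have := Hp j Hq Hj; rewrite nth_swap_pos // eqxx; lia.
by have := Hp q Hq Hqs; rewrite nth_swap_pos // (negbTE nqi) (negbTE nqj).
Qed.

Definition block_stable (s : seq nat) (a b : nat) :=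
  forall q, q < size s ->
    if a <= q <= b then a <= nth 0 s q <= b else nth 0 s q == q.

Lemma bruhat_le_block_stable u v a b :
  bruhat_le u v -> block_stable v a b -> block_stable u a b.
Proof.
move=> Huv Hv.
have Hpre p : p < a \/ b <= p -> prefix_bounded u p.
  move=> Hp; apply: bruhat_le_prefix_bounded Huv _ => q Hq /Hv.
  by case: ifP; lia.
have Hsuf p : p <= a \/ b < p -> suffix_bounded u p.
  move=> Hp; apply: bruhat_le_suffix_bounded Huv _ => q Hq /Hv.
  by case: ifP; lia.
move=> q Hq; case: ifP => Hab.
  by rewrite (Hpre b) ?(Hsuf a) //; lia.
have [Hqa|Hbq] : q < a \/ b < q by lia.
  by rewrite eqn_leq Hpre ?Hsuf //; lia.
by rewrite eqn_leq Hpre ?Hsuf //; lia.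
Qed.

Lemma eq_absz_addl (e : int) (x y : nat) :
  `|(e + x%:Z)%R|%N = `|(e + y%:Z)%R|%N -> x = y \/ (x%:Z + y%:Z = - (e *+ 2))%R.
Proof. lia. Qed.

Lemma increasing_gap (X : nat -> nat) m : (forall j, j < m -> X j < X j.+1) ->
  forall j1 j2, j1 <= j2 <= m -> X j1 + (j2 - j1) <= X j2.
Proof.
move=> X_incr j1; elim=> [|j2 IH] /andP [le12 le2m].
  by move: le12; rewrite leqn0 => /eqP ->; rewrite addn0.
have [->|ne12] := eqVneq j1 j2.+1; first lia.
by have := IH (_ : j1 <= j2 <= m); have := X_incr j2 le2m; lia.
Qed.

Section BeltResidues.
Variables (c L : nat) (e : int) (X Y : nat -> nat).
Hypotheses (ltcL : c < L) (Y_le : forall i, c + i < L -> Y i <= L).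
Hypotheses (X_incr : forall j, j < c -> X j < X j.+1)
  (Y_incr : forall i, (c + i).+1 < L -> Y i < Y i.+1).
Hypotheses (XY_disjoint : forall j i, j <= c -> c + i < L -> X j <> Y i)
  (XY_cover : forall k, k <= L ->
     (exists2 j, j <= c & X j = k) \/ (exists2 i, c + i < L & Y i = k)).
Hypotheses (X_res : forall j, j <= c -> `|(e + j%:Z)%R|%N = `|(e + (X j)%:Z)%R|%N)
  (Y_res : forall i, c + i < L ->
     `|(e + (c + i).+1%:Z)%R|%N = `|(e + (Y i)%:Z)%R|%N).

Lemma belt_upper_gap i1 i2 : i1 <= i2 -> c + i2 < L -> Y i1 + (i2 - i1) <= Y i2.
Proof.
move=> le12 lt2; apply: (@increasing_gap Y (L - c).-1); last lia.
by move=> i lti; apply: Y_incr; lia.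
Qed.

(* If [X j > j] while [X] fixes [0, j), the value [j] must be [Y 0]; the residue
   equations then force [X j = c.+1] and [j + c.+1 = -2e], which is refuted by
   [X j.+1] when [j < c] and by parity when [j = c]. *)
Lemma belt_lower_fixed j : j <= c -> X j = j.
Proof.
have ltc0L : c + 0 < L by rewrite addn0.
elim/ltn_ind: j => j IH lejc.
have leX : j <= X j.
  case: j IH lejc => [//|j] IH lejc.
  by have := IH j (ltnSn j) (ltnW lejc); have := X_incr lejc; lia.
case: (ltngtP (X j) j) => [|ltjX|//]; first lia.
have Y0 : Y 0 = j.
  have [[k lekc Xk]|[i Hi Yi]] := XY_cover (leq_trans lejc (ltnW ltcL)).
    case: (ltngtP k j) => [ltkj|ltjk|eqkj]; last by move: Xk; rewrite eqkj; lia.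
    - by have := IH k ltkj (ltnW (leq_trans ltkj lejc)); lia.
    - by have := increasing_gap X_incr (_ : j <= k <= c); lia.
  case: i Hi Yi => [//|i] Hi Yi.
  have ltY0 : Y 0 < j by have := belt_upper_gap (leq0n i.+1) Hi; lia.
  have leY0 : Y 0 <= c by lia.
  by case: (XY_disjoint leY0 ltc0L); rewrite IH.
have := Y_res ltc0L; rewrite Y0 addn0 => /eq_absz_addl [|Ec]; first lia.
have := X_res lejc => /eq_absz_addl [|EX]; first lia.
have [ltjc|] := ltnP j c; last lia.
have := X_incr ltjc; have := X_res ltjc => /eq_absz_addl; lia.
Qed.

Lemma belt_upper_shifted i : c + i < L -> Y i = (c + i).+1.
Proof.
move=> lti; have ltc0L : c + 0 < L by rewrite addn0.
have ltcY0 : c < Y 0.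
  rewrite ltnNge; apply/negP => leY0.
  by case: (XY_disjoint leY0 ltc0L); rewrite belt_lower_fixed.
have Ylast := Y_le (_ : c + (L - c).-1 < L).
have := belt_upper_gap (leq0n i) lti; have := @belt_upper_gap i (L - c).-1; lia.
Qed.

End BeltResidues.

Lemma mem_nodes lam i j : ((i, j) \in nodes lam) = in_diagram lam i j.
Proof.
apply/flatten_mapP/andP => [[i' + /mapP [j' + [-> ->]]]|[Hi Hj]].
  by rewrite !mem_iota /= !add0n => -> ->.
by exists i; rewrite ?mem_iota //; apply/mapP; exists j; rewrite ?mem_iota.
Qed.

Lemma node_ofE lam (f : nat -> nat -> nat) k i j :
  in_diagram lam i j -> f i j = k ->
  (forall i' j', in_diagram lam i' j' -> f i' j' = k -> (i', j') = (i, j)) ->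
  node_of lam f k = (i, j).
Proof.
move=> Hij fij f_inj; rewrite /node_of.
set P := fun x : nat * nat => f x.1 x.2 == k.
have hasP : has P (nodes lam).
  by apply/hasP; exists (i, j); rewrite ?mem_nodes //; apply/eqP.
have := nth_find (0, 0) hasP.
have := mem_nth (0, 0) (_ : find P (nodes lam) < size (nodes lam)).
rewrite -has_find => /(_ hasP).
by case: nth => i' j'; rewrite mem_nodes /P /= => Hij' /eqP /(f_inj _ _ Hij').
Qed.

Lemma nth_res_seq lam n kappa f k : k < n ->
  nth 0 (res_seq lam n kappa f) k =
  node_res kappa (node_of lam f k).1 (node_of lam f k).2.
Proof. by move=> ltkn; rewrite /res_seq (nth_map 0) ?size_iota // nth_iota. Qed.

Lemma nth_res_seq_tableau lam n kappa t i j : is_tableau lam n t ->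
  in_diagram lam i j -> nth 0 (res_seq lam n kappa t) (t i j) = node_res kappa i j.
Proof.
case=> t_lt t_inj _ Hij.
by rewrite nth_res_seq ?t_lt // (@node_ofE _ _ _ i j) // => i' j' /t_inj; apply.
Qed.

Lemma size_wperm lam n f : size (wperm lam n f) = n.
Proof. by rewrite /wperm size_map size_iota. Qed.

Lemma nth_wperm lam n f m : m < n ->
  nth 0 (wperm lam n f) m = f (reshape_index lam m) (reshape_offset lam m).
Proof. by move=> ltmn; rewrite /wperm (nth_map 0) ?size_iota // nth_iota. Qed.

Lemma leq_tlam lam i1 j1 i2 j2 : in_diagram lam i1 j1 -> in_diagram lam i2 j2 ->
  (tlam lam i1 j1 <= tlam lam i2 j2) = (i1 < i2) || ((i1 == i2) && (j1 <= j2)).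
Proof.
move=> /andP [_ H1] /andP [_ H2].
by rewrite /tlam (reshape_leq lam) !flatten_indexKl ?flatten_indexKr.
Qed.

Lemma tlam_ltn lam i j : in_diagram lam i j -> tlam lam i j < sumn lam.
Proof. by move=> /andP [_ H]; apply: flatten_indexP. Qed.

Lemma nth_wperm_tlam lam n f i j : sumn lam = n -> in_diagram lam i j ->
  nth 0 (wperm lam n f) (tlam lam i j) = f i j.
Proof.
move=> <- Hij; rewrite nth_wperm ?tlam_ltn //.
by case/andP: Hij => _ H; rewrite /tlam flatten_indexKl ?flatten_indexKr.
Qed.

Lemma reshape_node lam m : m < sumn lam ->
  in_diagram lam (reshape_index lam m) (reshape_offset lam m) /\
  tlam lam (reshape_index lam m) (reshape_offset lam m) = m.
Proof.
move=> ltm; split; last exact: reshape_indexK.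
by apply/andP; split; [apply: reshape_indexP | apply: reshape_offsetP].
Qed.

Lemma block_stable_wpermP lam n f a b : sumn lam = n ->
  block_stable (wperm lam n f) a b <->
  (forall i j, in_diagram lam i j ->
     if a <= tlam lam i j <= b then a <= f i j <= b else f i j == tlam lam i j).
Proof.
move=> Hn; split=> [Hf i j Hij | Hf q].
  have := Hf (tlam lam i j).
  by rewrite nth_wperm_tlam // size_wperm -Hn tlam_ltn //; apply.
rewrite size_wperm => ltqn; rewrite nth_wperm //.
have ltq : q < sumn lam by rewrite Hn.
have [Hq Eq] := reshape_node ltq.
by have := Hf _ _ Hq; rewrite Eq.
Qed.

Lemma nth_partition_geq lam i j : is_partition lam -> i <= j ->
  nth 0 lam j <= nth 0 lam i.
Proof.
case/andP=> sorted_lam _ leij; have [ltj|] := ltnP j (size lam); last first.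
  by move=> /(nth_default 0) ->.
have geq_trans : transitive geq by move=> x y z /=; lia.
by apply: (sorted_leq_nth geq_trans) => // [x | ]; [exact: leqnn | rewrite inE /=; lia].
Qed.

Section Garnir.
Variables (lam : seq nat) (r c : nat).
Hypotheses (lam_partition : is_partition lam) (garnir_node : in_diagram lam r.+1 c).

Local Notation a := (tlam lam r c).
Local Notation L := (nth 0 lam r).
Local Notation g := (garnir lam r c).

Lemma garnir_ltcL : c < L.
Proof.
case/andP: garnir_node => _ ltc.
exact: leq_trans ltc (nth_partition_geq lam_partition (leqnSn r)).
Qed.

Lemma in_diagram_lower j : j <= c -> in_diagram lam r.+1 j.
Proof. by case/andP: garnir_node => Hr Hc Hj; apply/andP; split; lia. Qed.

Lemma in_diagram_upper j : j < L -> in_diagram lam r j.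
Proof. by case/andP: garnir_node => Hr _ Hj; apply/andP; split => //; lia. Qed.

Lemma tlam_upper j : tlam lam r j = a + j - c.
Proof. by rewrite /tlam /flatten_index; lia. Qed.

Lemma tlam_lower j : tlam lam r.+1 j = a + (L - c) + j.
Proof.
have := garnir_ltcL; case/andP: garnir_node => Hr _ ltcL.
by rewrite /tlam /flatten_index (take_nth 0 (_ : r < size lam)) ?sumn_rcons; lia.
Qed.

Lemma garnir_belt i j : in_diagram lam i j -> a <= tlam lam i j <= a + L ->
  (i = r.+1 /\ j <= c) \/ (i = r /\ c <= j).
Proof.
move=> Hij; have ltcL := garnir_ltcL.
have -> : a + L = tlam lam r.+1 c by rewrite tlam_lower; lia.
by rewrite !leq_tlam // ?in_diagram_upper ?in_diagram_lower //; lia.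
Qed.

Lemma garnir_lower j : j <= c -> g r.+1 j = a + j.
Proof. by move=> lejc; rewrite /garnir eqxx lejc. Qed.

Lemma garnir_upper j : c <= j -> g r j = a + j.+1.
Proof. by move=> lecj; rewrite /garnir eqxx lecj (ltn_eqF (ltnSn r)) /=; lia. Qed.

Lemma garnir_out i j : in_diagram lam i j -> ~~ (a <= tlam lam i j <= a + L) ->
  g i j = tlam lam i j.
Proof.
move=> Hij out; rewrite /garnir.
case: ifP => [/andP [/eqP Ei lejc]|_].
  by move: out; rewrite Ei (tlam_lower j); lia.
case: ifP => [/andP [/eqP Ei lecj]|//].
by move: out Hij; rewrite Ei (tlam_upper j) => + /andP [_]; lia.
Qed.

Lemma garnir_block_stable n : sumn lam = n -> block_stable (wperm lam n g) a (a + L).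
Proof.
move=> Hn; apply/(block_stable_wpermP _ _ _ Hn) => i j Hij.
case: ifP => [Hin|/negbT out]; last by rewrite garnir_out.
have [[Ei lejc]|[Ei lecj]] := garnir_belt Hij Hin; subst i.
  by rewrite garnir_lower //; have := garnir_ltcL; lia.
by rewrite garnir_upper //; case/andP: Hij => _; lia.
Qed.

Lemma garnir_eq_belt i j x : in_diagram lam i j -> x <= L -> g i j = a + x ->
  (i, j) = if x <= c then (r.+1, x) else (r, x.-1).
Proof.
move=> Hij lexL; case: (boolP (a <= tlam lam i j <= a + L)) => [Hin|out].
  have [[-> lejc]|[-> lecj]] := garnir_belt Hij Hin.
    by rewrite garnir_lower // => /addnI <-; rewrite lejc.
  by rewrite garnir_upper // => /addnI <-; rewrite ltnNge lecj.
by rewrite garnir_out //; move: out; lia.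
Qed.

Lemma nth_res_seq_garnir n kappa x : sumn lam = n -> x <= L ->
  nth 0 (res_seq lam n kappa g) (a + x) = `|(kappa - r.+1%:Z + x%:Z)%R|%N.
Proof.
move=> Hn lexL; have ltcL := garnir_ltcL.
have ltxn : a + x < n.
  rewrite -Hn; apply: leq_trans (tlam_ltn (in_diagram_lower (leqnn c))).
  by rewrite tlam_lower; lia.
rewrite nth_res_seq //; have [lexc|ltcx] := leqP x c.
  rewrite (@node_ofE _ _ _ r.+1 x) ?in_diagram_lower ?garnir_lower //=.
    by rewrite /node_res; lia.
  by move=> i j Hij /(garnir_eq_belt Hij lexL); rewrite lexc.
rewrite (@node_ofE _ _ _ r x.-1) ?in_diagram_upper ?garnir_upper //=; try lia.
  by rewrite /node_res; lia.
by move=> i j Hij /(garnir_eq_belt Hij lexL); rewrite leqNgt ltcx.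
Qed.

Section GarnirTableau.
Variables (n : nat) (kappa : int) (t : nat -> nat -> nat).
Hypotheses (sum_lam : sumn lam = n) (t_tableau : is_tableau lam n t)
  (t_row_strict : row_strict lam t)
  (t_block : block_stable (wperm lam n t) a (a + L))
  (t_res : res_seq lam n kappa t = res_seq lam n kappa g).

Let e : int := (kappa - r.+1%:Z)%R.
Let X j := t r.+1 j - a.
Let Y i := t r (c + i) - a.

Lemma tab_block i j : in_diagram lam i j ->
  if a <= tlam lam i j <= a + L then a <= t i j <= a + L else t i j == tlam lam i j.
Proof. exact: (block_stable_wpermP t a (a + L) sum_lam).1 t_block i j. Qed.

Lemma tab_lower_belt j : j <= c -> a <= t r.+1 j <= a + L.
Proof.
move=> lejc; have := tab_block (in_diagram_lower lejc).
by rewrite tlam_lower ifT //; have := garnir_ltcL; lia.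
Qed.

Lemma tab_upper_belt i : c + i < L -> a <= t r (c + i) <= a + L.
Proof.
move=> lti; have := tab_block (in_diagram_upper lti).
by rewrite (tlam_upper (c + i)) ifT //; lia.
Qed.

Lemma tab_res i j : in_diagram lam i j -> a <= t i j <= a + L ->
  node_res kappa i j = `|(e + (t i j - a)%:Z)%R|%N.
Proof.
move=> Hij Hin; rewrite -(nth_res_seq_tableau kappa t_tableau Hij) t_res.
by rewrite -[t i j](subnKC (_ : a <= t i j)) ?nth_res_seq_garnir //; lia.
Qed.

Lemma tab_lower_res j : j <= c -> `|(e + j%:Z)%R|%N = `|(e + (X j)%:Z)%R|%N.
Proof.
move=> lejc; rewrite -tab_res ?in_diagram_lower ?tab_lower_belt //.
by rewrite /node_res /e; lia.
Qed.

Lemma tab_upper_res i : c + i < L ->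
  `|(e + (c + i).+1%:Z)%R|%N = `|(e + (Y i)%:Z)%R|%N.
Proof.
move=> lti; rewrite -tab_res ?in_diagram_upper ?tab_upper_belt //.
by rewrite /node_res /e; lia.
Qed.

Lemma tab_upper_le i : c + i < L -> Y i <= L.
Proof. by move/tab_upper_belt; rewrite /Y; lia. Qed.

Lemma tab_lower_incr j : j < c -> X j < X j.+1.
Proof.
move=> ltjc; have := t_row_strict (in_diagram_lower ltjc).
by have := tab_lower_belt (ltnW ltjc); rewrite /X; lia.
Qed.

Lemma tab_upper_incr i : (c + i).+1 < L -> Y i < Y i.+1.
Proof.
move=> lti; have := t_row_strict (in_diagram_upper lti).
by have := tab_upper_belt (ltnW lti); rewrite /Y addnS; lia.
Qed.

Lemma tab_lower_upper_disjoint j i : j <= c -> c + i < L -> X j <> Y i.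
Proof.
move=> lejc lti EXY; have := tab_lower_belt lejc; have := tab_upper_belt lti.
case: t_tableau => _ t_inj _ H1 H2.
have Et : t r.+1 j = t r (c + i) by move: EXY; rewrite /X /Y; lia.
by have [] := t_inj _ _ _ _ (in_diagram_lower lejc) (in_diagram_upper lti) Et; lia.
Qed.

Lemma tab_belt_cover k : k <= L ->
  (exists2 j, j <= c & X j = k) \/ (exists2 i, c + i < L & Y i = k).
Proof.
move=> lekL; have ltcL := garnir_ltcL.
have ltkn : a + k < n.
  rewrite -sum_lam; apply: leq_trans (tlam_ltn (in_diagram_lower (leqnn c))).
  by rewrite tlam_lower; lia.
case: t_tableau => _ _ /(_ _ ltkn) [i [j [Hij tij]]].
have := tab_block Hij; case: ifP => [Hin _|/negbT out /eqP]; last by lia.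
have [[Ei lejc]|[Ei lecj]] := garnir_belt Hij Hin; subst i.
  by left; exists j; rewrite // /X tij; lia.
right; exists (j - c); first by case/andP: Hij; lia.
by rewrite /Y subnKC // tij; lia.
Qed.

Lemma garnir_tableau_eq : tab_eq lam t g.
Proof.
have ltcL := garnir_ltcL.
have X_fixed := belt_lower_fixed ltcL tab_lower_incr tab_upper_incr
  tab_lower_upper_disjoint tab_belt_cover tab_lower_res tab_upper_res.
have Y_shifted := belt_upper_shifted ltcL tab_upper_le tab_lower_incr tab_upper_incr
  tab_lower_upper_disjoint tab_belt_cover tab_lower_res tab_upper_res.
move=> i j Hij; have := tab_block Hij.
case: ifP => [Hin _|/negbT out /eqP ->]; last by rewrite garnir_out.
have [[Ei lejc]|[Ei lecj]] := garnir_belt Hij Hin; subst i.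
  have := X_fixed j lejc; have := tab_lower_belt lejc.
  by rewrite garnir_lower // /X; lia.
have lti : c + (j - c) < L by case/andP: Hij; lia.
have := Y_shifted _ lti; have := tab_upper_belt lti.
by rewrite garnir_upper // /Y subnKC //; lia.
Qed.

End GarnirTableau.

End Garnir.

Theorem mainTheorem15 (n : nat) (lam : seq nat) (kappa : int) (r c : nat) :
  is_partition lam -> sumn lam = n -> in_diagram lam r.+1 c ->
  ~ (exists t : nat -> nat -> nat,
       [/\ is_tableau lam n t, row_strict lam t,
           tab_sdom lam n t (garnir lam r c) &
           res_seq lam n kappa t = res_seq lam n kappa (garnir lam r c)]).
Proof.
move=> lam_partition sum_lam garnir_node [t [t_tableau t_row_strict [t_dom t_neq] t_res]].
apply/t_neq/(garnir_tableau_eq lam_partition garnir_node sum_lam t_tableau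
  t_row_strict _ t_res).
exact: bruhat_le_block_stable t_dom (garnir_block_stable lam_partition garnir_node sum_lam).
Qed.
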